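(* Let $\alpha\neq\beta$ and let $(g_n)$ be as in the context. For $n\ge1$ write $$g_n(x)=\sum_{k=0}^{n-1}A_k^{(n)}(\alpha-\beta)^{-k}(x-\beta)^k .$$ Then $A_0^{(n)}=\beta^n$ and, for $1\le k<n$, $$A_k^{(n)}=(n-k)\sum_{j=1}^{k}\frac1j\binom{n-1}{j-1}\binom{k-1}{j-1}\alpha^j\beta^{n-j}.$$
   Context: Fix complex numbers $\alpha\neq\beta$. Define polynomials $g_n(x)\in\mathbb{C}[x]$ recursively by $g_0(x)=1$ and, for $n\ge1$, $$(x-\alpha)(\alpha-\beta)^{n-1}g_n(x)=\alpha(x-\beta)^n g_{n-1}(\alpha)-x(\alpha-\beta)^n g_{n-1}(x).$$ (The right-hand side vanishes at $x=\alpha$, so it is divisible by $x-\alpha$ and $g_n$ is a uniquely determined polynomial; for $n\ge1$ it has degree at most $n-1$ in $x$.) *)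

From HB Require Import structures.
From mathcomp Require Import all_boot all_order all_algebra.
From mathcomp Require Import reals.
From mathcomp.real_closed Require Import complex.
Set Implicit Arguments. Unset Strict Implicit. Unset Printing Implicit Defensive.
Import Order.TTheory GRing.Theory Num.Theory.
Local Open Scope ring_scope.

Definition Acoef (R : realType) (al be : R[i]) (n k : nat) : R[i] :=
  if k == 0%N then be ^+ n
  else (n - k)%:R *
       \sum_(1 <= j < k.+1)
          (j%:R)^-1 * ('C(n.-1, j.-1))%:R * ('C(k.-1, j.-1))%:R
            * al ^+ j * be ^+ (n - j).

From HB Require Import structures.
From mathcomp Require Import all_boot all_order all_algebra.
From mathcomp Require Import reals.
From mathcomp.real_closed Require Import complex.
From mathcomp Require Import ring zify.
Set Implicit Arguments. Unset Strict Implicit. Unset Printing Implicit Defensive.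
Import Order.TTheory GRing.Theory Num.Theory.
Local Open Scope ring_scope.

(* Substituting x = be + (al - be) z turns the recurrence into
   (z - 1) g_n = c_n z^n - ((al - be) z + be) g_(n-1), with c_n = al g_(n-1)(al).
   The polynomials sum_k A_k^(n) z^k satisfy the same relation up to the
   coefficient of z^n: comparing coefficients of al^(i+1) be^(n-i) reduces this
   to a five-term identity between binomial coefficients, a consequence of
   Pascal's rule and (j+1) C(m, j+1) = (m-j) C(m, j). Hence by induction
   (z - 1)(sum_k A_k^(n) z^k - g_n) is a multiple of z^n; evaluating at z = 1
   kills the multiple, and z - 1 is not a zero divisor. *)

Section Binomials.
Variable F : numFieldType.

(* [acoef n k i] is the coefficient of al^(i+1) be^(n-i-1) in [Acoef al be n k]. *)
Definition acoef n k i : F :=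
  (n - k)%:R / i.+1%:R * 'C(n.-1, i)%:R * 'C(k.-1, i)%:R.

Definition shift (a : nat -> F) i := if i is i'.+1 then a i' else 0.

Lemma acoef_eq0 n k i : (k < i)%N -> acoef n k.+1 i = 0.
Proof. by move=> lt_ki; rewrite /acoef /= (bin_small lt_ki) mulr0. Qed.

Lemma acoef_rec N K i : (0 < K)%N -> (K < N)%N ->
  acoef N.+1 K i - acoef N.+1 K.+1 i + (shift (acoef N K) i - acoef N K i)
    + acoef N K.+1 i = 0.
Proof.
case: K => // p _ lt_pN.
have [q ->] : exists q, N = (p + q).+2 by exists (N - p.+2)%N; lia.
rewrite /acoef /= !subSS -!addnS !addKn !addnS.
case: i => [|j] /=.
  by rewrite !bin0 !divr1 !mulr1 !mulrS; ring.
set a := 'C((p + q).+1, j)%:R : F; set b := 'C((p + q).+1, j.+1)%:R : F.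
set X := 'C(p, j.+1)%:R : F; set Y := 'C(p, j)%:R : F.
have -> : 'C((p + q).+2, j.+1)%:R = b + a :> F by rewrite -natrD.
have -> : 'C(p.+1, j.+1)%:R = X + Y :> F by rewrite -natrD.
have key : j.+1%:R * a * X + q.+1%:R * a * Y = j.+1%:R * b * Y :> F.
  rewrite /a /b /X /Y -!natrM -natrD; congr _%:R.
  rewrite mulnAC mul_bin_left mulnAC -mulnA mul_bin_left.
  have [le_jp|lt_pj] := leqP j p; last by rewrite (bin_small lt_pj) !muln0.
  by rewrite mulnA -!mulnDl; congr (_ * _ * _)%N; lia.
(* Clearing the denominators (j+1)(j+2) leaves exactly [key]. *)
transitivity ((j.+1%:R * a * X + q.+1%:R * a * Y - j.+1%:R * b * Y)
              / (j.+1%:R * j.+2%:R)); last by rewrite key subrr mul0r.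
by rewrite !mulrS; field; rewrite -!mulrS !pnatr_eq0.
Qed.
End Binomials.
Arguments acoef {F} n k i.

Section Acoef.
Variable R : realType.
Variables al be : R[i].
Local Notation A := (Acoef al be).
Local Notation mono n i := (al ^+ i.+1 * be ^+ (n - i.+1)).

Lemma Acoef_eq0 n k : (0 < k)%N -> (n <= k)%N -> A n k = 0.
Proof. by case: k => // k _; rewrite -subn_eq0 /Acoef /= => /eqP ->; rewrite mul0r. Qed.

Lemma Acoef_sum n k m : (k < m)%N ->
  A n k.+1 = \sum_(i < m) acoef n k.+1 i * mono n i.
Proof.
move=> lt_km; rewrite /Acoef /= big_add1 /= (big_nat_widen _ _ m) //.
rewrite big_distrr big_mkcond big_mkord; apply: eq_bigr => i _ /=.
case: ltnP => [_|lt_ki]; last by rewrite acoef_eq0 // mul0r.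
by rewrite /acoef !mulrA.
Qed.

Lemma mulr_be_Acoef n k m : (k < m)%N -> (k < n)%N ->
  be * A n k.+1 = \sum_(i < m) acoef n k.+1 i * mono n.+1 i.
Proof.
move=> lt_km lt_kn; rewrite (Acoef_sum n lt_km) mulr_sumr; apply: eq_bigr => i _.
have [le_ik|lt_ki] := leqP i k; last by rewrite acoef_eq0 // !mul0r mulr0.
by rewrite subSS -(subnSK (leq_ltn_trans le_ik lt_kn)) (exprS be); ring.
Qed.

Lemma mulr_al_Acoef n k :
  al * A n k.+1 = \sum_(i < k.+2) shift (acoef n k.+1) i * mono n.+1 i.
Proof.
rewrite (Acoef_sum n (ltnSn k)) mulr_sumr [RHS]big_ord_recl /= mul0r add0r.
by apply: eq_bigr => i _; rewrite /bump /= add1n add0n subSS (exprS al i.+1); ring.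
Qed.

Lemma Acoef_rec N K : (K < N)%N ->
  A N.+1 K - A N.+1 K.+1 + (al - be) * A N K + be * A N K.+1 = 0.
Proof.
case: K => [|k] lt_kN.
  rewrite !(Acoef_sum _ (ltnSn 0)) !big_ord1 /Acoef /acoef /=.
  case: N lt_kN => // N _; rewrite !subn1 /= !bin0 !divr1 !mulr1 !exprS.
  by rewrite !mulrS; ring.
rewrite mulrBl (@Acoef_sum N.+1 k k.+2) // (@Acoef_sum N.+1 k.+1 k.+2) //.
rewrite mulr_al_Acoef (@mulr_be_Acoef N k k.+2) ?(@mulr_be_Acoef N k.+1 k.+2)
  ?(ltnW lt_kN) //.
rewrite -!sumrB -!big_split /=; apply: big1 => i _.
by rewrite -!mulrBl -!mulrDl acoef_rec ?mul0r.
Qed.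

Definition Apoly n : {poly R[i]} := \poly_(k < n.+1) A n k.

Lemma coef_Apoly n k : (Apoly n)`_k = A n k.
Proof. by rewrite coef_poly; case: ltnP => // lt_nk; rewrite Acoef_eq0 //; lia. Qed.

Lemma Apoly0 : Apoly 0 = 1.
Proof.
apply/polyP => k; rewrite coef_Apoly coefC; case: k => [|k] //=.
by rewrite Acoef_eq0.
Qed.

Lemma Apoly_rec m : exists c,
  ('X - 1) * Apoly m.+1 + ((al - be) *: 'X + be%:P) * Apoly m = c *: 'X^(m.+1).
Proof.
set p := _ + _; exists p`_m.+1; apply/polyP => k.
rewrite coefZ coefXn; have [->|ne_km] := eqVneq k m.+1; first by rewrite mulr1.
rewrite mulr0 /p mulrBl mul1r mulrDl -scalerAl mul_polyC.
rewrite !(coefD, coefN, coefZ, coefXM, coef_Apoly); case: k ne_km => [|k] ne_km /=.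
  by rewrite /Acoef /= exprS; ring.
rewrite addrA; have [lt_km|le_mk] := ltnP k m; first exact: Acoef_rec.
by rewrite !Acoef_eq0 ?subrr ?mulr0 ?addr0 //; lia.
Qed.

End Acoef.

Lemma mul_root_eq0 (F : idomainType) (q p r : {poly F}) (a c : F) :
  q != 0 -> root q a -> r.[a] != 0 -> q * p = c *: r -> p = 0.
Proof.
move=> nz_q /rootP qa0 nz_ra qp_cr.
have /eqP : c * r.[a] = 0 by rewrite -hornerZ -qp_cr hornerM qa0 mul0r.
rewrite mulf_eq0 (negbTE nz_ra) orbF => /eqP c0.
by move: qp_cr; rewrite c0 scale0r => /eqP; rewrite mulf_eq0 (negbTE nz_q) => /eqP.
Qed.

Section ChangeOfVariable.
Variable R : realType.
Variables al be : R[i].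
Local Notation A := (Acoef al be).
Local Notation Apoly := (Apoly al be).

Definition zvar : {poly R[i]} := (al - be)^-1 *: ('X - be%:P).

Lemma Apoly_comp_zvar n : (0 < n)%N ->
  Apoly n \Po zvar = \sum_(k < n) (A n k * (al - be) ^- k) *: ('X - be%:P) ^+ k.
Proof.
case: n => // n _; rewrite /Apoly poly_def big_ord_recr /= Acoef_eq0 // scale0r addr0.
rewrite linear_sum; apply: eq_bigr => k _.
by rewrite linearZ /= rmorphXn /= comp_polyX /zvar exprZn scalerA exprVn.
Qed.

Hypothesis al_neq_be : al != be.

Lemma X_sub_be_zvar : 'X - be%:P = (al - be) *: zvar.
Proof. by rewrite /zvar scalerA divff ?scale1r // subr_eq0. Qed.

Lemma X_sub_al_zvar : 'X - al%:P = (al - be) *: (zvar - 1).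
Proof. by rewrite scalerBr -X_sub_be_zvar alg_polyC polyCB; ring. Qed.

Lemma X_zvar : 'X = (al - be) *: zvar + be%:P.
Proof. by rewrite -X_sub_be_zvar subrK. Qed.

Lemma horner_zvar_al : zvar.[al] = 1.
Proof. by rewrite /zvar hornerZ hornerXsubC mulVf // subr_eq0. Qed.

Lemma zvar_sub1_neq0 : zvar - 1 != 0.
Proof.
apply/negP => /eqP/(congr1 (horner^~ be)).
rewrite /zvar hornerD hornerN hornerZ hornerXsubC subrr mulr0 hornerC sub0r horner0.
by move/eqP; rewrite oppr_eq0 oner_eq0.
Qed.

Lemma Apoly_zvar_rec m : exists c,
  (zvar - 1) * (Apoly m.+1 \Po zvar) + ((al - be) *: zvar + be%:P) * (Apoly m \Po zvar)
  = c *: zvar ^+ m.+1.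
Proof.
have [c Ec] := Apoly_rec al be m; exists c.
move: (congr1 (comp_poly zvar) Ec).
by rewrite comp_polyD !comp_polyM comp_polyB comp_polyD comp_polyZ comp_polyX -polyC1
  !comp_polyC polyC1 comp_polyZ (rmorphXn (comp_poly zvar)) /= comp_polyX.
Qed.

Variable g : nat -> {poly R[i]}.
Hypothesis g0 : g 0%N = 1.
Hypothesis g_rec : forall n : nat, (0 < n)%N ->
  (al - be) ^+ n.-1 *: (('X - al%:P) * g n)
  = (al * (g n.-1).[al]) *: ('X - be%:P) ^+ n - (al - be) ^+ n *: ('X * g n.-1).

Lemma g_zvar_rec m :
  (zvar - 1) * g m.+1
  = (al * (g m).[al]) *: zvar ^+ m.+1 - ((al - be) *: zvar + be%:P) * g m.
Proof.
have := g_rec (ltn0Sn m); rewrite /= X_sub_al_zvar X_sub_be_zvar -X_zvar exprZn.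
rewrite -scalerAl scalerA -exprSr (scalerA (al * _)) (mulrC (al * _)).
rewrite -(scalerA (_ ^+ m.+1)) -scalerBr.
by apply: scalerI; rewrite expf_neq0 // subr_eq0.
Qed.

Lemma g_Apoly n : g n = Apoly n \Po zvar.
Proof.
elim: n => [|m IH]; first by rewrite g0 Apoly0 comp_polyC.
have [c Ec] := Apoly_zvar_rec m.
have E : (zvar - 1) * (Apoly m.+1 \Po zvar - g m.+1)
         = (c - al * (g m).[al]) *: zvar ^+ m.+1.
  by rewrite mulrBr g_zvar_rec (scalerBl c) -Ec IH; ring.
have root_al : root (zvar - 1) al.
  by rewrite rootE hornerD hornerN horner_zvar_al hornerC subrr.
have zvarX_al : (zvar ^+ m.+1).[al] != 0.
  by rewrite horner_exp horner_zvar_al expr1n oner_neq0.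
apply/esym/eqP; rewrite -subr_eq0; apply/eqP.
exact: mul_root_eq0 zvar_sub1_neq0 root_al zvarX_al E.
Qed.

End ChangeOfVariable.

Theorem mainTheorem4 (R : realType) (al be : R[i]) (g : nat -> {poly R[i]}) :
  al != be ->
  g 0%N = 1 ->
  (forall n : nat, (0 < n)%N ->
     ((al - be) ^+ n.-1 *: (('X - al%:P) * g n))
     = (al * (g n.-1).[al]) *: ('X - be%:P) ^+ n - (al - be) ^+ n *: ('X * g n.-1)) ->
  forall n : nat, (0 < n)%N ->
    g n = \sum_(k < n) (Acoef al be n k * (al - be) ^- k) *: ('X - be%:P) ^+ k.
Proof.
move=> al_neq_be g0 g_rec n n_gt0.
by rewrite (g_Apoly al_neq_be g0 g_rec) Apoly_comp_zvar.
Qed.
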